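(* Let $\mathbf k$ be a commutative ring with identity and $X$ a set, with $\Delta$ and $\mathcal N^{(n)}$ as in the context. Then for every $n\ge0$, $$\Delta(\mathcal N^{(n)})\subseteq\big(\mathcal N^{(0)}\otimes\mathcal N^{(n)}\big)\oplus\Big(\bigoplus_{p+q=n,\ p>0,\ q>0}\mathcal N^{(p)}\otimes\mathcal N^{(q)}\Big).$$
   Context: Let $M(X)$ be the free monoid on $X$ with identity $\mathbf 1$ and $S(X)=M(X)\setminus\{\mathbf 1\}$. For a set $Y$ write $\lfloor Y\rfloor=\{\lfloor y\rfloor: y\in Y\}$ for a disjoint copy of $Y$. Bracketed words: $\mathfrak M_0=M(X)$, $\mathfrak M_{n+1}=M(X\sqcup\lfloor\mathfrak M_n\rfloor)$, $\mathfrak M(X)=\bigcup_n\mathfrak M_n$ (monoid under concatenation); $\mathrm{dep}(w)$ is the least $n$ with $w\in\mathfrak M_n$; every $w\ne\mathbf 1$ has a unique standard decomposition $w=w_1\cdots w_m$ with factors alternately in $S(X)$ and $\lfloor\mathfrak M(X)\rfloor$ ($m$ = breadth). $\mathfrak X_0=M(X)$; for $n\ge1$, $\mathfrak X_n$ consists of $\mathbf 1$ and all words $w_1\cdots w_m$ ($m\ge1$) with factors alternately in $S(X)$ and $\lfloor\mathfrak X_{n-1}\rfloor$; $\mathfrak X_\infty=\bigcup_n\mathfrak X_n$. $\mathcal N(X)=\mathbf k\mathfrak X_\infty$ (free $\mathbf k$-module), $N_X(w)=\lfloor w\rfloor$ extended linearly (also written $\lfloor a\rfloor$). Product $\diamond$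 (bilinear, by induction on $\mathrm{dep}(w)+\mathrm{dep}(w')$): $\mathbf 1$ is the identity; for breadth-one $w,w'\ne\mathbf 1$: $w\diamond w'=ww'$ if one of them is in $S(X)$, and $\lfloor\bar w\rfloor\diamond\lfloor\bar w'\rfloor=\lfloor\lfloor\bar w\rfloor\diamond\bar w'\rfloor+\lfloor\bar w\diamond\lfloor\bar w'\rfloor\rfloor-\lfloor\lfloor\bar w\diamond\bar w'\rfloor\rfloor$; in general $w\diamond w'=w_1\cdots w_{m-1}(w_m\diamond w'_1)w'_2\cdots w'_{m'}$ for standard decompositions. $(\mathcal N(X),\diamond,N_X)$ is an associative unital algebra with identity $\mathbf 1$ and Nijenhuis operator $N_X$ (the free Nijenhuis algebra on $X$). A sequence $w_1,\dots,w_m$ in $\mathcal I:=X\sqcup\lfloor\mathfrak X_\infty\rfloor$ is alternating if for each $i$ at least one of $w_i,w_{i+1}$ lies in $X$. Every $w\in\mathfrak X_\infty\setminus\{\mathbf 1\}$ can be written uniquely as $w=w_1\diamond\cdots\diamond w_m$ (equal to the concatenation $w_1\cdots w_m$) with $w_1,\dots,w_m$ alternating in $\mathcal I$; $m=\mathrm{wid}(w)$ is the width, $\mathrm{wid}(\mathbf 1)=0$. $\mathcal N(X)\otimes\mathcal N(X)$ carries the product $(a\otimes b)\diamond(a'\otimes b')=(a\diamond a')\otimes(b\diamond b')$. The linear map $\Delta:\mathcal N(X)\to\mathcal N(X)\otimes\mathcal N(X)$ is defined on $\mathfrak X_\infty$ by induction on depth: $\Delta(\mathbf 1)=\mathbf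 1\otimes\mathbf 1$; $\Delta(x)=\mathbf 1\otimes x$ for $x\in X$; $\Delta(x_1\cdots x_m)=\Delta(x_1)\diamond\cdots\diamond\Delta(x_m)$ for $x_i\in X$, $m\ge2$; $\Delta(\lfloor\bar w\rfloor)=(\mathrm{id}\otimes N_X)\Delta(\bar w)$ for $\bar w\in\mathfrak X_\infty$; and if $w$ has $\diamond$-factorization $w=w_1\diamond\cdots\diamond w_m$ with $m\ge2$, $\Delta(w)=\Delta(w_1)\diamond\cdots\diamond\Delta(w_m)$. Grading: for $w\in\mathfrak X_\infty$, $\deg(w)=\deg_X(w)+\deg_N(w)$, where $\deg_X(w)$ is the number of occurrences of letters of $X$ in $w$ and $\deg_N(w)$ the number of occurrences of the bracket $\lfloor\ \rfloor$ (e.g. $\deg(\lfloor x\rfloor)=2$, $\deg(x\lfloor x\rfloor)=3$). Set $\mathcal N^{(n)}=\mathbf k\{w\in\mathfrak X_\infty:\deg(w)=n\}$; thus $\mathcal N(X)=\bigoplus_{n\ge0}\mathcal N^{(n)}$, $\mathcal N^{(0)}=\mathbf k\mathbf 1$, and $N_X(\mathcal N^{(n)})\subseteq\mathcal N^{(n+1)}$. *)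

From HB Require Import structures.
From mathcomp Require Import all_boot all_algebra.
From Stdlib Require Import ClassicalEpsilon.
Set Implicit Arguments. Unset Strict Implicit. Unset Printing Implicit Defensive.
Import GRing.Theory.
Local Open Scope ring_scope.

(* Bracketed words: a word is a list of letters; a letter is either a
   generator x \in X or a bracket |_ w _| of a word w. *)
Inductive letter (X : Type) : Type :=
| Lx of X
| Lb of seq (letter X).
Arguments Lx {X}. Arguments Lb {X}.

Definition word (X : Type) := seq (letter X).

Definition isLb {X} (l : letter X) : bool :=
  match l with Lb _ => true | Lx _ => false end.

Fixpoint noadj {X} (s : word X) : Prop :=
  match s with
  | l1 :: ((l2 :: _) as s') => ~~ (isLb l1 && isLb l2) /\ noadj s'
  | _ => True
  end.

Fixpoint wfL {X} (l : letter X) : Prop :=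
  match l with
  | Lx _ => True
  | Lb a => (fix ww (s : word X) : Prop :=
               match s with [::] => True | l' :: s' => wfL l' /\ ww s' end) a
            /\ noadj a
  end.
Fixpoint allwf {X} (s : word X) : Prop :=
  match s with [::] => True | l :: s' => wfL l /\ allwf s' end.
Definition wfW {X} (w : word X) : Prop := allwf w /\ noadj w.

Fixpoint degL {X} (l : letter X) : nat :=
  match l with
  | Lx _ => 1
  | Lb a => ((fix dw (s : word X) : nat :=
               match s with [::] => 0 | l' :: s' => degL l' + dw s' end) a).+1
  end.
Fixpoint degW {X} (w : word X) : nat :=
  match w with [::] => 0 | l :: s => degL l + degW s end.

(* Formal k-linear combinations (elements of the free module k T). *)
Definition fsum (k : Type) (T : Type) := seq (k * T).

Definition coeff {k : nmodType} {T : Type} (s : fsum k T) (t : T) : k :=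
  \sum_(p <- s) (if excluded_middle_informative (p.2 = t) then p.1 else 0).

Section Nijenhuis.
Variables (k : comPzRingType) (X : Type).

Definition brk (s : fsum k (word X)) : fsum k (word X) :=
  map (fun p => (p.1, [:: Lb p.2])) s.
Definition wrap (u v : word X) (s : fsum k (word X)) : fsum k (word X) :=
  map (fun p => (p.1, u ++ p.2 ++ v)) s.
Definition fneg (s : fsum k (word X)) : fsum k (word X) :=
  map (fun p => (- p.1, p.2)) s.

Fixpoint prodF (fuel : nat) (w w' : word X) : fsum k (word X) :=
  match fuel with
  | 0 => [:: (1, w ++ w')]
  | f.+1 =>
    match rev w, w' with
    | Lb a :: rw, Lb b :: t =>
        wrap (rev rw) t
          (brk (prodF f [:: Lb a] b) ++ brk (prodF f a [:: Lb b])
           ++ fneg (brk (brk (prodF f a b))))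
    | _, _ => [:: (1, w ++ w')]
    end
  end.
Definition prodW (w w' : word X) : fsum k (word X) :=
  prodF (degW w + degW w') w w'.

(* N(X) (x) N(X), free on pairs of words *)
Definition tsum := fsum k (word X * word X).

Definition tprod (S S' : tsum) : tsum :=
  flatten (allpairs (fun P P' : k * (word X * word X) =>
    allpairs (fun q r : k * word X =>
       (P.1 * P'.1 * q.1 * r.1, (q.2, r.2)))
       (prodW P.2.1 P'.2.1) (prodW P.2.2 P'.2.2)) S S').

Definition tunit : tsum := [:: (1, ([::], [::]))].

Definition idN (S : tsum) : tsum :=
  map (fun P => (P.1, (P.2.1, [:: Lb P.2.2]))) S.

(* Delta on letters (elements of X |_| |_ X_infty _|) and on words via the
   diamond-factorization into letters *)
Fixpoint deltaL (l : letter X) : tsum :=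
  match l with
  | Lx x => [:: (1, ([::], [:: Lx x]))]
  | Lb a => idN ((fix dw (s : word X) : tsum :=
                   match s with
                   | [::] => tunit
                   | [:: l'] => deltaL l'
                   | l' :: s' => tprod (deltaL l') (dw s')
                   end) a)
  end.
Fixpoint deltaW (w : word X) : tsum :=
  match w with
  | [::] => tunit
  | [:: l] => deltaL l
  | l :: s => tprod (deltaL l) (deltaW s)
  end.

Definition deltaLin (a : fsum k (word X)) : tsum :=
  flatten (map (fun p => map (fun P => (p.1 * P.1, P.2)) (deltaW p.2)) a).

Definition inNdeg (n : nat) (a : fsum k (word X)) : Prop :=
  forall w, ~ (wfW w /\ degW w = n) -> coeff a w = 0.

Definition inTarget (n : nat) (S : tsum) : Prop :=
  forall u v : word X,
    ~ (wfW u /\ wfW v /\ (degW u + degW v)%N = n /\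
       (degW u = 0 \/ (0 < degW v)%N)) ->
    coeff S (u, v) = 0.

End Nijenhuis.

(* In every term of the Nijenhuis relation
     |_a_| <> |_b_| = |_ |_a_| <> b _| + |_ a <> |_b_| _| - |_ |_ a <> b _| _|
   the contents of a and b stay surrounded by exactly two brackets and the
   result is a single bracket letter, so the diamond product of two words of
   X_infinity is a combination of words of X_infinity whose degree is the sum
   of the degrees.  The coproduct of a generator x is 1 (x) x and that of |_w_|
   is (id (x) N) Delta(w); as Delta is multiplicative along the factorization
   into letters, every basis tensor u (x) v of Delta(w), w <> 1, consists of
   words of X_infinity with deg u + deg v = deg w and deg v > 0, while
   Delta(1) = 1 (x) 1.  The statement for linear combinations follows by
   collecting the terms of a with equal words. *)

From Pilot Require Import Defs.
From mathcomp Require Import all_boot all_algebra.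
From Stdlib Require Import ClassicalEpsilon.
From mathcomp Require Import zify.
Set Implicit Arguments. Unset Strict Implicit. Unset Printing Implicit Defensive.
Import GRing.Theory.

Fixpoint allp {A} (P : A -> Prop) (s : seq A) : Prop :=
  if s is x :: s' then P x /\ allp P s' else True.

Lemma allp_cat A (P : A -> Prop) s1 s2 :
  allp P (s1 ++ s2) <-> allp P s1 /\ allp P s2.
Proof. by elim: s1 => [|x s1 IH] /=; [tauto | rewrite IH; tauto]. Qed.

Lemma allp_map A B (f : A -> B) (P : B -> Prop) s :
  allp P (map f s) <-> allp (fun x => P (f x)) s.
Proof. by elim: s => [|x s IH] /=; [tauto | rewrite IH; tauto]. Qed.

Lemma sub_allp A (P Q : A -> Prop) s :
  (forall x, P x -> Q x) -> allp P s -> allp Q s.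
Proof. by move=> PQ; elim: s => //= x s IH [/PQ Px /IH]. Qed.

Lemma allp_flatten A (P : A -> Prop) ss :
  allp (allp P) ss -> allp P (flatten ss).
Proof. by elim: ss => //= s ss IH [Ps /IH Pss]; apply/allp_cat. Qed.

Lemma allp_allpairs A B C (f : A -> B -> C) (P : A -> Prop) (Q : B -> Prop)
    (R : C -> Prop) s t :
  (forall x y, P x -> Q y -> R (f x y)) ->
  allp P s -> allp Q t -> allp R (allpairs f s t).
Proof.
move=> PQR; elim: s => //= x s IH [Px Ps] Qt; apply/allp_cat; split; last exact: IH.
by apply/allp_map; apply: sub_allp Qt => y; apply: PQR.
Qed.

Section Words.
Variable X : Type.
Implicit Types (a b c s t u w : word X) (l : letter X).

Definition headLb s := if s is l :: _ then isLb l else false.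

Fixpoint lastLb s :=
  match s with [::] => false | [:: l] => isLb l | _ :: s' => lastLb s' end.

Lemma lastLb_rev s : lastLb s = headLb (rev s).
Proof.
case/lastP: s => // s l; rewrite rev_rcons -cats1 /=.
by elim: s => //= l1 [].
Qed.

Lemma noadj_cat s1 s2 :
  noadj (s1 ++ s2) <-> [/\ noadj s1, noadj s2 & ~~ (lastLb s1 && headLb s2)].
Proof.
have noadj_cons2 l l1 s :
  noadj (l :: l1 :: s) <-> ~~ (isLb l && isLb l1) /\ noadj (l1 :: s) by [].
elim: s1 => [|l [|l1 s1] IH]; first by split => [|[]].
  by case: s2 {IH} => [|l2 s2] /=; rewrite ?andbF; split => [[]|[]].
apply: (iff_trans (noadj_cons2 l l1 (s1 ++ s2))); rewrite -cat_cons IH.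
by split => [[? [? ? ?]] | [[? ?] ? ?]].
Qed.

Lemma allwf_cat s1 s2 : allwf (s1 ++ s2) <-> allwf s1 /\ allwf s2.
Proof. by elim: s1 => [|l s1 IH] /=; [tauto | rewrite IH; tauto]. Qed.

Lemma wfW_cat s1 s2 :
  wfW (s1 ++ s2) <-> [/\ wfW s1, wfW s2 & ~~ (lastLb s1 && headLb s2)].
Proof.
rewrite /wfW allwf_cat noadj_cat.
by split => [[[? ?] [? ? ?]] | [[? ?] [? ?] ?]].
Qed.

Lemma degW_cat s1 s2 : degW (s1 ++ s2) = (degW s1 + degW s2)%N.
Proof. by elim: s1 => [|l s1 IH] //=; rewrite IH addnA. Qed.

Lemma degL_Lb a : degL (Lb a) = (degW a).+1.
Proof. by congr _.+1; elim: a => //= l a ->. Qed.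

Lemma degW_bracket a : degW [:: Lb a] = (degW a).+1.
Proof. by rewrite -degL_Lb /= addn0. Qed.

Lemma degL_gt0 l : (0 < degL l)%N.
Proof. by case: l. Qed.

Lemma degW_eq0 w : degW w = 0%N -> w = [::].
Proof. by case: w => //= l w; have := degL_gt0 l; lia. Qed.

Lemma wfW_bracket a : wfW [:: Lb a] <-> wfW a.
Proof.
have wfL_Lb : wfL (Lb a) = wfW a.
  by rewrite /= /wfW; congr (_ /\ _); elim: a => //= l a ->.
by split => [[[wf_a _] _] | wf_a]; [rewrite -wfL_Lb | split; [split; rewrite ?wfL_Lb|]].
Qed.

Definition wfdeg n w := wfW w /\ degW w = n.

Lemma wfdeg_insert_bracket u t c n :
  wfW u -> wfW t -> ~~ lastLb u -> ~~ headLb t -> wfdeg n c ->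
  wfdeg (degW u + n.+1 + degW t) (u ++ [:: Lb c] ++ t).
Proof.
move=> wf_u wf_t ntl_u nhd_t [wf_c deg_c].
split; last by rewrite !degW_cat degW_bracket deg_c addnA.
apply/wfW_cat; split; rewrite ?(negbTE ntl_u) //.
by apply/wfW_cat; split; rewrite //= ?andbF //; apply/wfW_bracket.
Qed.

End Words.

Section DiamondProduct.
Variables (k : comPzRingType) (X : Type).
Implicit Types (a b c s t u w : word X) (S : fsum k (word X)).

Definition homogeneous n S := allp (fun p => wfdeg n p.2) S.

Lemma homogeneous_brk n S : homogeneous n S -> homogeneous n.+1 (brk S).
Proof.
rewrite /homogeneous /brk allp_map; apply: sub_allp => p [wf_p deg_p].
by split; [apply/wfW_bracket | rewrite degW_bracket deg_p].
Qed.

Lemma homogeneous_wrap_brk u t n S :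
  wfW u -> wfW t -> ~~ lastLb u -> ~~ headLb t -> homogeneous n S ->
  homogeneous (degW u + n.+1 + degW t) (Defs.wrap u t (brk S)).
Proof.
move=> wf_u wf_t ntl_u nhd_t; rewrite /homogeneous /Defs.wrap /brk !allp_map.
by apply: sub_allp => p; apply: wfdeg_insert_bracket.
Qed.

Lemma homogeneous_cat n S1 S2 :
  homogeneous n S1 -> homogeneous n S2 -> homogeneous n (S1 ++ S2).
Proof. by move=> H1 H2; apply/allp_cat. Qed.

Lemma homogeneous_wrap_fneg u t n S :
  homogeneous n (Defs.wrap u t S) -> homogeneous n (Defs.wrap u t (fneg S)).
Proof. by rewrite /homogeneous /Defs.wrap /fneg !allp_map. Qed.

Lemma prodF_homogeneous f w w' : (degW w + degW w' <= f)%N -> wfW w -> wfW w' ->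
  homogeneous (degW w + degW w') (prodF k f w w').
Proof.
elim: f w w' => [|f IH] w w' deg_le wf_w wf_w'.
  by move: deg_le; rewrite leqn0 addn_eq0 => /andP[/eqP/degW_eq0-> /eqP/degW_eq0->].
have concat_case : ~~ (lastLb w && headLb w') ->
    homogeneous (degW w + degW w') [:: ((1%R : k), w ++ w')].
  by move=> nadj; split => //; split; [apply/wfW_cat | rewrite degW_cat].
(* Only |_a_| |_b_| at the junction triggers the Nijenhuis relation. *)
rewrite /=; case E: (rev w) => [|[x|a] rw];
  case: w' wf_w' deg_le concat_case => [|[y|b] t];
  try by move=> _ _; apply; rewrite lastLb_rev E /= ?andbF.
move=> wf_bt deg_le _; move: wf_w deg_le.
have {E}-> : w = rev rw ++ [:: Lb a] by rewrite -[w]revK E rev_cons cats1.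
move=> /wfW_cat[wf_u /wfW_bracket wf_a]; rewrite andbT => ntl_u deg_le.
move/(wfW_cat [:: Lb b] t): wf_bt => [/wfW_bracket wf_b wf_t nhd_t].
have deg_eq : (degW (rev rw ++ [:: Lb a]) + degW (Lb b :: t)
             = degW (rev rw) + (degW a + degW b).+2 + degW t)%N.
  by rewrite -(cat1s (Lb b) t) !degW_cat !degW_bracket; lia.
rewrite deg_eq; rewrite deg_eq in deg_le.
have IH1 : homogeneous (degW a + degW b).+1 (prodF k f [:: Lb a] b).
  by move: (IH [:: Lb a] b); rewrite degW_bracket; apply; [lia | apply/wfW_bracket |].
have IH2 : homogeneous (degW a + degW b).+1 (prodF k f a [:: Lb b]).
  move: (IH a [:: Lb b]); rewrite degW_bracket addnS.
  by apply; [lia | | apply/wfW_bracket].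
have IH3 : homogeneous (degW a + degW b) (prodF k f a b) by apply: IH => //; lia.
rewrite /Defs.wrap !map_cat; apply: homogeneous_cat; [|apply: homogeneous_cat].
- exact: homogeneous_wrap_brk.
- exact: homogeneous_wrap_brk.
- apply: homogeneous_wrap_fneg; apply: homogeneous_wrap_brk => //.
  exact: homogeneous_brk.
Qed.

Lemma prodW_homogeneous w w' : wfW w -> wfW w' ->
  homogeneous (degW w + degW w') (prodW k w w').
Proof. exact: prodF_homogeneous. Qed.

End DiamondProduct.

Section Coproduct.
Variables (k : comPzRingType) (X : Type).
Implicit Types (a w : word X) (l : letter X) (S : tsum k X).

Definition rpos_bideg n (uv : word X * word X) :=
  [/\ wfW uv.1, wfW uv.2, (degW uv.1 + degW uv.2)%N = n & (0 < degW uv.2)%N].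

Definition rpos_homogeneous n S := allp (fun P => rpos_bideg n P.2) S.

Lemma tprod_rpos n1 n2 S1 S2 :
  rpos_homogeneous n1 S1 -> rpos_homogeneous n2 S2 ->
  rpos_homogeneous (n1 + n2) (tprod S1 S2).
Proof.
move=> H1 H2; apply: allp_flatten; apply: allp_allpairs H1 H2.
move=> P P' [wf_u wf_v deg_uv pos_v] [wf_u' wf_v' deg_uv' pos_v'].
apply: allp_allpairs (prodW_homogeneous k wf_u wf_u') (prodW_homogeneous k wf_v wf_v').
by move=> q r [wf_q deg_q] [wf_r deg_r]; split => //=; rewrite ?deg_q ?deg_r; lia.
Qed.

Lemma idN_rpos n S : rpos_homogeneous n S -> rpos_homogeneous n.+1 (idN S).
Proof.
rewrite /rpos_homogeneous /idN allp_map; apply: sub_allp => P [wf_u wf_v deg_uv _].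
by split; cbn [fst snd]; rewrite ?degW_bracket ?addnS ?deg_uv //; apply/wfW_bracket.
Qed.

Lemma deltaL_Lb a : deltaL k (Lb a) = idN (deltaW k a).
Proof. by congr idN; elim: a => // l [|l2 a]. Qed.

Lemma deltaW_cons2 l l2 w :
  deltaW k [:: l, l2 & w] = tprod (deltaL k l) (deltaW k (l2 :: w)).
Proof. by []. Qed.

(* [deltaL] and [deltaW] are mutually recursive, hence the induction on a
   bound for the degree rather than on the word. *)
Lemma deltaW_rpos N w : (0 < size w)%N -> (degW w <= N)%N ->
  rpos_homogeneous (degW w) (deltaW k w).
Proof.
elim: N w => [|N IHw] [|l w] // _ deg_w.
  by move: deg_w => /=; have := degL_gt0 l; lia.
have deltaL_rpos l' : (degL l' <= N.+1)%N -> rpos_homogeneous (degL l') (deltaL k l').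
  case: l' => [x|a] deg_l; first by split => //; split.
  rewrite deltaL_Lb degL_Lb; case: a deg_l => [|l' a] deg_a.
    by split => //; split => //; apply/wfW_bracket.
  by apply/idN_rpos/IHw => //; rewrite -ltnS -degL_Lb.
elim: w l deg_w => [|l2 w IH] l deg_w.
  by move: deg_w => /=; rewrite addn0; apply: deltaL_rpos.
rewrite deltaW_cons2; apply: tprod_rpos.
  by apply: deltaL_rpos; move: deg_w => /=; lia.
by apply: IH; move: deg_w => /=; lia.
Qed.

Definition target_bideg n (uv : word X * word X) :=
  wfW uv.1 /\ wfW uv.2 /\ (degW uv.1 + degW uv.2)%N = n /\
  (degW uv.1 = 0%N \/ (0 < degW uv.2)%N).

Lemma deltaW_target w : allp (fun P => target_bideg (degW w) P.2) (deltaW k w).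
Proof.
case: w => [|l w]; first by do 4!split => //; left.
apply: sub_allp (deltaW_rpos (w := l :: w) isT (leqnn _)) => P [? ? ? ?].
by do 3!split => //; right.
Qed.

End Coproduct.

Section Coefficients.
Variables (k : comPzRingType) (T : Type).
Implicit Types (s : fsum k T) (t : T).
Local Open Scope ring_scope.

(* T has no decidable equality; basis elements are compared classically, as in
   [coeff]. *)
Definition key_is t (p : k * T) : bool :=
  if excluded_middle_informative (p.2 = t) then true else false.

Lemma coeffE s t : coeff s t = \sum_(p <- s | key_is t p) p.1.
Proof.
rewrite big_mkcond; apply: eq_bigr => p _.
by rewrite /key_is; case: excluded_middle_informative.
Qed.

Lemma coeff_cat s1 s2 t : coeff (s1 ++ s2) t = coeff s1 t + coeff s2 t.
Proof. by rewrite /coeff big_cat. Qed.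

Lemma coeff_scale c s t :
  coeff (map (fun p => (c * p.1, p.2)) s) t = c * coeff s t.
Proof. by rewrite !coeffE big_map mulr_sumr. Qed.

Lemma coeff_out (P : T -> Prop) s t :
  allp (fun p => P p.2) s -> ~ P t -> coeff s t = 0.
Proof.
elim: s => [|p s IH] /= Ps not_Pt; first by rewrite /coeff big_nil.
case: Ps => Pp Ps; rewrite /coeff big_cons -/(coeff s t) IH // addr0.
by case: excluded_middle_informative => // E; case: not_Pt; rewrite -E.
Qed.

Lemma coeff_drop_key t s : coeff ([seq p <- s | ~~ key_is t p]) t = 0.
Proof.
rewrite coeffE big_filter_cond big1 // => p /andP[/negbTE].
by rewrite /key_is /=; case: excluded_middle_informative.
Qed.

Lemma coeff_drop_other_key t0 s t :
  t <> t0 -> coeff ([seq p <- s | ~~ key_is t0 p]) t = coeff s t.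
Proof.
move=> t_neq; rewrite !coeffE big_filter_cond; apply: eq_bigl => p /=.
rewrite /key_is; do 2!case: excluded_middle_informative => //=.
by move=> -> E; case: t_neq.
Qed.

Lemma sum_coeff_mul_eq0 (F : T -> k) s :
  (forall t, coeff s t = 0 \/ F t = 0) -> \sum_(p <- s) p.1 * F p.2 = 0.
Proof.
move: {2}(size s) (leqnn (size s)) => n; elim: n s => [|n IH] [|p0 s] //=;
  rewrite ?big_nil // => size_s vanish.
set t0 := p0.2; rewrite (bigID (key_is t0)) /=.
have key_t0 : \sum_(p <- p0 :: s | key_is t0 p) p.1 * F p.2 = coeff (p0 :: s) t0 * F t0.
  rewrite coeffE mulr_suml; apply: eq_bigr => p.
  by rewrite /key_is; case: excluded_middle_informative => // key_p _; rewrite key_p.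
rewrite key_t0 -big_filter IH ?addr0.
- by case: (vanish t0) => ->; rewrite ?mul0r ?mulr0.
- have key_p0 : key_is t0 p0 by rewrite /key_is; case: excluded_middle_informative.
  by rewrite /= key_p0 size_filter (leq_trans (count_size _ _)).
- move=> t; case: (excluded_middle_informative (t = t0)) => [-> | t_neq].
    by left; apply: coeff_drop_key.
  by rewrite coeff_drop_other_key.
Qed.

End Coefficients.

Lemma coeff_deltaLin (k : comPzRingType) (X : Type) (a : fsum k (word X)) uv :
  coeff (deltaLin a) uv = (\sum_(p <- a) p.1 * coeff (deltaW k p.2) uv)%R.
Proof.
elim: a => [|p a IH]; first by rewrite /coeff !big_nil.
by rewrite /deltaLin /= coeff_cat coeff_scale big_cons IH.
Qed.

Theorem mainTheorem10 (k : comPzRingType) (X : Type) (n : nat)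
    (a : fsum k (word X)) :
  inNdeg n a -> inTarget n (deltaLin a).
Proof.
move=> a_homog u v not_target; rewrite coeff_deltaLin.
apply: (sum_coeff_mul_eq0 (F := fun w => coeff (deltaW k w) (u, v))) => w.
have [deg_w | deg_w] := eqVneq (degW w) n.
  by right; apply: (coeff_out (deltaW_target k w)); rewrite deg_w.
by left; apply: a_homog => -[_ /eqP]; rewrite (negbTE deg_w).
Qed.
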